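(* Let $D$ be a second-order linear differential operator elliptic at ${\bf z}$, and let ${\bf X}=\{{\bf x}_1,\dots,{\bf x}_N\}$ with ${\bf x}_1={\bf z}$ be such that there exists a positive numerical differentiation formula for $Df({\bf z})$ on ${\bf X}$ that is exact of order $q\in\{3,4\}$. Then $\rho_{q,D}({\bf z},{\bf X},1,2)=\tau_D({\bf z}):=2\sum_{|\alpha|=1}c_{2\alpha}({\bf z})$.
   Context: $\Pi^d_q$: real polynomials in $d$ variables of total degree $<q$. $Df=\sum_{|\alpha|\le2}c_\alpha\partial^\alpha f$ with real coefficient functions; elliptic at ${\bf z}$ means $\sum_{|\alpha|=2}c_\alpha({\bf z})\xi^\alpha>0$ for all $\xi\ne0$. ${\bf X}$ consists of distinct points. A formula $Df({\bf z})\approx\sum_jw_jf({\bf x}_j)$ with ${\bf x}_1={\bf z}$ is positive if $w_1<0$ and $w_j>0$ for $j\ge2$; exact of order $q$ if $Dp({\bf z})=\sum_jw_jp({\bf x}_j)$ for all $p\in\Pi^d_q$. $\rho_{q,D}({\bf z},{\bf X},1,2):=\inf\{\sum_j|w_j|\,\|{\bf x}_j-{\bf z}\|_2^2:{\bf w}\text{ exact of order }q\}$. *)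

(* Real numbers are modelled by an arbitrary real field
   R : realFieldType (the statement is purely algebraic/order-theoretic). *)
From HB Require Import structures.
From mathcomp Require Import all_boot all_order all_algebra.
Set Implicit Arguments. Unset Strict Implicit. Unset Printing Implicit Defensive.
Import Order.TTheory GRing.Theory Num.Theory.
Local Open Scope ring_scope.

Section Defs.
Variables (R : realFieldType) (d : nat).

Definition coord (x : 'rV[R]_d) (i : 'I_d) : R := x ord0 i.

Definition mdeg (k : nat) (a : {ffun 'I_d -> 'I_k}) : nat := (\sum_(i < d) a i)%N.

Definition monom (k : nat) (b : {ffun 'I_d -> 'I_k}) (x : 'rV[R]_d) : R :=
  \prod_(i < d) coord x i ^+ b i.

Definition dmonom (k : nat) (a : {ffun 'I_d -> 'I_3}) (b : {ffun 'I_d -> 'I_k})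
  (x : 'rV[R]_d) : R :=
  \prod_(i < d) (((b i : nat) ^_ (a i : nat))%:R * coord x i ^+ (b i - a i)).

(* A polynomial in Pi^d_q: a coefficient family over multi-indices with entries
   < q, whose coefficients vanish for total degree >= q. *)
Definition inPi (q : nat) (p : {ffun 'I_d -> 'I_q} -> R) : Prop :=
  forall b, (q <= mdeg b)%N -> p b = 0.

Definition peval (q : nat) (p : {ffun 'I_d -> 'I_q} -> R) (x : 'rV[R]_d) : R :=
  \sum_b p b * monom b x.

Definition pderiv (q : nat) (a : {ffun 'I_d -> 'I_3}) (p : {ffun 'I_d -> 'I_q} -> R)
  (x : 'rV[R]_d) : R :=
  \sum_b p b * dmonom a b x.

(* Second-order operator D f = sum_{|alpha|<=2} c_alpha d^alpha f, with
   coefficient functions c alpha : R^d -> R (only |alpha| <= 2 are used). *)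
Definition Dapply (c : {ffun 'I_d -> 'I_3} -> 'rV[R]_d -> R) (q : nat)
  (p : {ffun 'I_d -> 'I_q} -> R) (z : 'rV[R]_d) : R :=
  \sum_(a | (mdeg a <= 2)%N) c a z * pderiv a p z.

Definition mpow (a : {ffun 'I_d -> 'I_3}) (xi : 'rV[R]_d) : R := monom a xi.

Definition elliptic_at (c : {ffun 'I_d -> 'I_3} -> 'rV[R]_d -> R) (z : 'rV[R]_d) : Prop :=
  forall xi : 'rV[R]_d, xi != 0 ->
    0 < \sum_(a | mdeg a == 2%N) c a z * mpow a xi.

Definition exact_formula (c : {ffun 'I_d -> 'I_3} -> 'rV[R]_d -> R) (z : 'rV[R]_d)
  (N : nat) (X : 'I_N -> 'rV[R]_d) (w : 'I_N -> R) (q : nat) : Prop :=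
  forall p : {ffun 'I_d -> 'I_q} -> R, inPi p ->
    Dapply c p z = \sum_(j < N) w j * peval p (X j).

(* positivity, with x_1 = z the point of index ord0 *)
Definition positive_formula (N : nat) (w : 'I_N.+1 -> R) : Prop :=
  w ord0 < 0 /\ forall j : 'I_N.+1, j != ord0 -> 0 < w j.

Definition sqdist (x y : 'rV[R]_d) : R := \sum_(i < d) (coord x i - coord y i) ^+ 2.

Definition is_inf (S : R -> Prop) (r : R) : Prop :=
  (forall s, S s -> r <= s) /\ (forall m, (forall s, S s -> m <= s) -> m <= r).

(* rho_{q,D}(z,X,1,2) = inf { sum_j |w_j| ||x_j - z||_2^2 : w exact of order q } *)
Definition rho_set (c : {ffun 'I_d -> 'I_3} -> 'rV[R]_d -> R) (z : 'rV[R]_d)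
  (N : nat) (X : 'I_N -> 'rV[R]_d) (q : nat) : R -> Prop :=
  fun s => exists w : 'I_N -> R, exact_formula c z X w q /\
                       s = \sum_(j < N) `|w j| * sqdist (X j) z.

Definition twoE (i : 'I_d) : {ffun 'I_d -> 'I_3} :=
  [ffun j => if j == i then inord 2 else ord0].

Definition tauD (c : {ffun 'I_d -> 'I_3} -> 'rV[R]_d -> R) (z : 'rV[R]_d) : R :=
  2 * \sum_(i < d) c (twoE i) z.

End Defs.

(* Every exact formula of order q >= 3 reproduces D applied to the quadratic
   polynomial p(x) = ||x - z||^2 at z, and D p(z) = tau_D(z).  Hence
   sum_j w_j ||x_j - z||^2 = tau_D(z) for every exact w, which bounds
   sum_j |w_j| ||x_j - z||^2 from below by tau_D(z); a positive formula attains
   the bound, since its only negative weight sits at x_1 = z. *)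
From Pilot Require Import Defs.
From HB Require Import structures.
From mathcomp Require Import all_boot all_order all_algebra.
From mathcomp Require Import ring.
Import Order.TTheory GRing.Theory Num.Theory.
Local Open Scope ring_scope.

Lemma sum_indicator_mul (R : pzSemiRingType) (T : finType) (u : T) (F : T -> R) :
  \sum_t (t == u)%:R * F t = F u.
Proof.
rewrite (bigD1 u) //= eqxx mul1r big1 ?addr0 // => t /negbTE ->.
by rewrite mul0r.
Qed.

Lemma is_inf_min (R : realFieldType) (S : R -> Prop) (r : R) :
  (forall s, S s -> r <= s) -> S r -> is_inf S r.
Proof. by move=> lb Sr; split=> // m /(_ r); apply. Qed.

(* The m-th derivative of (X - t)^2 at t, written with falling factorials. *)
Lemma ffact_sqr_sub_at (R : comPzRingType) (t : R) (m : nat) :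
  (2 ^_ m)%:R * t ^+ (2 - m) - 2 * t * ((1 ^_ m)%:R * t ^+ (1 - m))
    + t ^+ 2 * ((0 ^_ m)%:R * t ^+ (0 - m)) = 2 * (m == 2)%:R.
Proof.
case: m => [|[|[|m]]]; last by rewrite !ffact_small //=; ring.
all: rewrite ffactE /=; ring.
Qed.

Section MultiIndex.
Variable d : nat.

Definition mdelta (n m : nat) (i : 'I_d) : {ffun 'I_d -> 'I_n.+1} :=
  [ffun l => if l == i then inord m else ord0].

Lemma twoE_mdelta (i : 'I_d) : twoE i = mdelta 2 2 i.
Proof. by []. Qed.

Lemma mdelta_id n m i : (m <= n)%N -> mdelta n m i i = m :> nat.
Proof. by move=> lemn; rewrite ffunE eqxx inordK. Qed.

Lemma mdelta_out n m i l : l != i -> mdelta n m i l = 0%N :> nat.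
Proof. by rewrite ffunE => /negbTE ->. Qed.

Lemma mdeg_mdelta n m i : (m <= n)%N -> mdeg (mdelta n m i) = m.
Proof.
move=> lemn; rewrite /mdeg (bigD1 i) //= mdelta_id // big1 ?addn0 // => l.
exact: mdelta_out.
Qed.

Lemma natr_eq_twoE (R : comPzSemiRingType) (a : {ffun 'I_d -> 'I_3}) i :
  (a == twoE i)%:R =
  \prod_(l | l != i) (a l == 0%N :> nat)%:R * (a i == 2%N :> nat)%:R :> R.
Proof.
have [->|neq] := eqVneq a (twoE i).
  by rewrite mdelta_id // eqxx mulr1 big1 // => l /mdelta_out ->.
have [ai2|_] := eqVneq (a i : nat) 2%N; last by rewrite mulr0.
case: (pickP [pred l | (l != i) && (a l != 0%N :> nat)]) => [l /andP[li /negbTE al]|a0].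
  by rewrite (bigD1 l li) /= al !mul0r.
case/eqP: neq; apply/ffunP => l; apply/val_inj => /=.
have [->|li] := eqVneq l i; first by rewrite ai2 mdelta_id.
by move: (a0 l); rewrite /= li mdelta_out // => /negbFE/eqP.
Qed.

End MultiIndex.

Arguments mdelta {d n}.

Section SquaredDistance.
Variables (R : realFieldType) (d k : nat) (z : 'rV[R]_d).
Local Notation mindex := {ffun 'I_d -> 'I_k.+3}.

(* ||x - z||^2 = sum_i (x_i^2 - 2 z_i x_i + z_i^2), as a coefficient family;
   mdelta 0 i is the zero multi-index for every i. *)
Definition sqdist_poly (b : mindex) : R :=
  \sum_i ((b == mdelta 2 i)%:R - 2 * Defs.coord z i * (b == mdelta 1 i)%:R
          + Defs.coord z i ^+ 2 * (b == mdelta 0 i)%:R).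

Lemma sum_sqdist_poly (F : mindex -> R) :
  \sum_b sqdist_poly b * F b =
  \sum_i (F (mdelta 2 i) - 2 * Defs.coord z i * F (mdelta 1 i)
          + Defs.coord z i ^+ 2 * F (mdelta 0 i)).
Proof.
under eq_bigr do rewrite mulr_suml.
rewrite exchange_big; apply: eq_bigr => i _ /=.
under eq_bigr do rewrite mulrDl mulrBl -(mulrA (2 * _)) -(mulrA (_ ^+ 2)).
by rewrite !big_split sumrN /= -!mulr_sumr !sum_indicator_mul.
Qed.

Lemma inPi_sqdist_poly : inPi sqdist_poly.
Proof.
move=> b degb; rewrite /sqdist_poly big1 // => i _.
have nb m : (m <= 2)%N -> b == mdelta m i = false.
  move=> lem2; apply/negbTE/eqP => bE.
  by move: degb; rewrite bE mdeg_mdelta ?ltnNge ?(leq_trans lem2).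
by rewrite !nb // !mulr0 subr0 addr0.
Qed.

Lemma monom_mdelta m i (x : 'rV[R]_d) :
  (m <= k.+2)%N -> monom (@mdelta _ k.+2 m i) x = Defs.coord x i ^+ m.
Proof.
move=> lem; rewrite /monom (bigD1 i) //= mdelta_id // big1 ?mulr1 // => l li.
by rewrite mdelta_out.
Qed.

Lemma dmonom_mdelta (a : {ffun 'I_d -> 'I_3}) m i (x : 'rV[R]_d) :
  (m <= k.+2)%N ->
  dmonom a (@mdelta _ k.+2 m i) x =
  (\prod_(l | l != i) (a l == 0%N :> nat)%:R)
    * ((m ^_ a i)%:R * Defs.coord x i ^+ (m - a i)).
Proof.
move=> lem; rewrite /dmonom (bigD1 i) //= mdelta_id // mulrC; congr (_ * _).
by apply: eq_bigr => l li; rewrite mdelta_out // ffact0n sub0n expr0 mulr1.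
Qed.

Lemma peval_sqdist_poly (x : 'rV[R]_d) : peval sqdist_poly x = sqdist x z.
Proof.
rewrite /peval sum_sqdist_poly; apply: eq_bigr => i _.
by rewrite !monom_mdelta // expr1 expr0; ring.
Qed.

Lemma pderiv_sqdist_poly a : pderiv a sqdist_poly z = 2 * \sum_i (a == twoE i)%:R.
Proof.
rewrite /pderiv sum_sqdist_poly mulr_sumr; apply: eq_bigr => i _.
rewrite !dmonom_mdelta //; set P := \prod_(l | _) _.
transitivity (P * (2 * (a i == 2%N :> nat)%:R)); last first.
  by rewrite natr_eq_twoE mulrCA.
rewrite -(ffact_sqr_sub_at _ (Defs.coord z i)); ring.
Qed.

Lemma Dapply_sqdist_poly c : Dapply c sqdist_poly z = tauD c z.
Proof.
rewrite /Dapply /tauD.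
under eq_bigr do rewrite pderiv_sqdist_poly mulrCA.
rewrite -mulr_sumr; congr (2 * _).
under eq_bigr do rewrite mulr_sumr.
rewrite exchange_big; apply: eq_bigr => i _ /=.
rewrite (bigD1 (twoE i)) ?twoE_mdelta ?mdeg_mdelta //= eqxx mulr1 big1 ?addr0 //.
by move=> a /andP[_ /negbTE ->]; rewrite mulr0.
Qed.

Lemma exact_formula_sqdist c N (X : 'I_N -> 'rV[R]_d) w :
  exact_formula c z X w k.+3 -> \sum_j w j * sqdist (X j) z = tauD c z.
Proof.
move=> exact_w; rewrite -Dapply_sqdist_poly (exact_w _ inPi_sqdist_poly).
by apply: eq_bigr => j _; rewrite peval_sqdist_poly.
Qed.

End SquaredDistance.

Arguments exact_formula_sqdist {R d k z c N X w}.

Lemma sqdist_ge0 (R : realFieldType) d (x y : 'rV[R]_d) : 0 <= sqdist x y.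
Proof. by rewrite sumr_ge0 // => i _; rewrite sqr_ge0. Qed.

Lemma sqdist_xx (R : realFieldType) d (x : 'rV[R]_d) : sqdist x x = 0.
Proof. by rewrite /sqdist big1 // => i _; rewrite subrr expr0n. Qed.

Theorem is_inf_rho_tauD (R : realFieldType) d c (z : 'rV[R]_d)
  N (X : 'I_N.+1 -> 'rV[R]_d) q :
  (2 < q)%N -> X ord0 = z ->
  (exists w : 'I_N.+1 -> R, positive_formula w /\ exact_formula c z X w q) ->
  is_inf (rho_set c z X q) (tauD c z).
Proof.
case: q => [|[|[|k]]] // _ X0 [w [[_ w_gt0] exact_w]].
apply: is_inf_min => [_ [v [exact_v ->]]|].
  rewrite -(exact_formula_sqdist exact_v); apply: ler_sum => j _.
  by rewrite ler_wpM2r ?sqdist_ge0 ?real_ler_norm ?num_real.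
exists w; split=> //; rewrite -(exact_formula_sqdist exact_w).
apply: eq_bigr => j _; have [->|j0] := eqVneq j ord0.
  by rewrite X0 sqdist_xx !mulr0.
by rewrite ger0_norm // ltW // w_gt0.
Qed.

Theorem mainTheorem15 (R : realFieldType) (d : nat)
  (c : {ffun 'I_d -> 'I_3} -> 'rV[R]_d -> R) (z : 'rV[R]_d)
  (N : nat) (X : 'I_N.+1 -> 'rV[R]_d) (q : nat) :
  (q = 3%N \/ q = 4%N) ->
  elliptic_at c z ->
  injective X ->
  X ord0 = z ->
  (exists w : 'I_N.+1 -> R, positive_formula w /\ exact_formula c z X w q) ->
  is_inf (rho_set c z X q) (tauD c z).
Proof.
(* Ellipticity and distinctness of the nodes only serve to make a positive
   formula possible. *)
move=> q34 _ _; apply: is_inf_rho_tauD.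
by case: q34 => ->.
Qed.
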